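(* Let $V$ be an $N$-dimensional vector space over $\mathbb{F}_q$ and $\nu\ge N$. Let $\overline{Pr}_\nu(V)$ be the set of linear-isometry classes of projective weight functions $\operatorname{wt}_{\mathcal{F}}$ on $V$ with $\mathcal{F}$ a spanning projective point family of cardinality $\nu$, and let $\overline{\mathrm{Gr}}_{\nu-N}(\mathbb{F}_q^\nu)_{d_H\ge3}$ be the set of Hamming-equivalence classes of $(\nu-N)$-dimensional subspaces of $\mathbb{F}_q^\nu$ with minimum Hamming distance at least $3$. Then the map $\Psi$ sending the class of $\operatorname{wt}_{\mathcal{F}}$ to the Hamming-equivalence class of the parent codes of $\mathcal{F}$ is a well-defined bijection $\overline{Pr}_\nu(V)\to\overline{\mathrm{Gr}}_{\nu-N}(\mathbb{F}_q^\nu)_{d_H\ge3}$, whose inverse sends the class of a subspace $P$ to the class of the quotient weight $\operatorname{wt}_{\mathrm{quot},\varphi_P}$, where $\varphi_P:\mathbb{F}_q^\nu\to V$ is any linear map with kernel $P$ and $\mathbb{F}_q^\nu$ carries the Hamming weight.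
   Context: A projective point family in $V$ is a set $\mathcal{F}$ of pairwise linearly independent nonzero vectors (distinct $1$-dimensional subspaces); it is spanning if $\langle\mathcal{F}\rangle=V$. Its projective weight is $\operatorname{wt}_{\mathcal{F}}(x)=\min(\{|I|:I\subseteq\mathcal{F},x\in\langle I\rangle\}\cup\{\infty\})$. A parent function of $\mathcal{F}$ (with $|\mathcal{F}|=\nu$) is a linear map $\varphi:\mathbb{F}_q^\nu\to V$ with $\{\langle\varphi(e_i)\rangle\}_{i=1}^\nu=\mathcal{F}$; its kernel is a parent code of $\mathcal{F}$. Two weight functions $\operatorname{wt}_1,\operatorname{wt}_2$ on $V$ are linearly isometric if $\operatorname{wt}_1=\operatorname{wt}_2\circ L$ for some $L\in\mathrm{GL}(V)$. Subspaces $C_1,C_2\le\mathbb{F}_q^\nu$ are Hamming equivalent if $L(C_1)=C_2$ for some linear Hamming-weight-preserving map $L$ (i.e. a permutation composed with an invertible diagonal matrix). Quotient weight: $\operatorname{wt}_{\mathrm{quot},\psi}(y)=\min\{\operatorname{wt}_H(w):w\in\psi^{-1}(y)\}$. *)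

From HB Require Import structures.
From mathcomp Require Import all_boot all_order all_algebra.
Set Implicit Arguments. Unset Strict Implicit. Unset Printing Implicit Defensive.
Import GRing.Theory.
Local Open Scope ring_scope.

(* Model: V = 'rV[F]_N (an N-dimensional F-vector space), F a finite field F_q;
   F^nu = 'rV[F]_nu; linear maps are elements of 'Hom(_, _). *)

Section Defs.
Variable F : finFieldType.

Definition proj_point_family (N : nat) (Fam : {set 'rV[F]_N}) : Prop :=
  (forall v, v \in Fam -> v != 0) /\
  (forall u v, u \in Fam -> v \in Fam -> u != v -> free [:: u; v]).

Definition spanning (N : nat) (Fam : {set 'rV[F]_N}) : Prop :=
  (<<enum Fam>>%VS = fullv).

Definition spanning_ppf (N : nat) (Fam : {set 'rV[F]_N}) : Prop :=
  proj_point_family Fam /\ spanning Fam.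

(* projective weight: min |I|, I subset of Fam, x in span I.  The default
   value #|Fam| of the min is only reached when no such I exists (value
   "infinity"); it never occurs for spanning families. *)
Definition projwt (N : nat) (Fam : {set 'rV[F]_N}) (x : 'rV[F]_N) : nat :=
  \big[minn/#|Fam|]_(I : {set 'rV[F]_N} |
        (I \subset Fam) && (x \in <<enum I>>%VS)) #|I|.

Definition hamw (nu : nat) (w : 'rV[F]_nu) : nat := #|[set i | w 0 i != 0]|.

(* quotient weight of psi : F^nu -> V (F^nu with the Hamming weight); the
   default nu is only reached for y outside the image of psi. *)
Definition quotwt (nu N : nat) (psi : 'Hom('rV[F]_nu, 'rV[F]_N)) (y : 'rV[F]_N)
  : nat :=
  \big[minn/nu]_(w : 'rV[F]_nu | psi w == y) hamw w.

Definition parent_fun (nu N : nat) (Fam : {set 'rV[F]_N})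
  (phi : 'Hom('rV[F]_nu, 'rV[F]_N)) : Prop :=
  (forall i : 'I_nu, exists2 v, v \in Fam & <[phi (delta_mx ord0 i)]>%VS = <[v]>%VS) /\
  (forall v, v \in Fam -> exists i : 'I_nu, <[phi (delta_mx ord0 i)]>%VS = <[v]>%VS).

Definition lin_isometric (N : nat) (wt1 wt2 : 'rV[F]_N -> nat) : Prop :=
  exists L : 'End('rV[F]_N), lker L = 0%VS /\ forall x, wt1 x = wt2 (L x).

Definition hamming_equiv (nu : nat) (C1 C2 : {vspace 'rV[F]_nu}) : Prop :=
  exists L : 'End('rV[F]_nu), (forall w, hamw (L w) = hamw w) /\ (L @: C1)%VS = C2.

(* minimum Hamming distance >= 3 (vacuous for the zero subspace) *)
Definition min_dist_ge3 (nu : nat) (C : {vspace 'rV[F]_nu}) : Prop :=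
  forall w, w \in C -> w != 0 -> (3 <= hamw w)%N.

End Defs.

From HB Require Import structures.
From mathcomp Require Import all_boot all_order all_algebra.
Set Implicit Arguments. Unset Strict Implicit. Unset Printing Implicit Defensive.
Import Order.TTheory GRing.Theory.
Local Open Scope ring_scope.

(* A parent function phi of a spanning projective point family F identifies
   wt_F with the quotient of the Hamming weight by phi: x lies in the span of
   k points of F iff x = phi w for a word w of Hamming weight at most k.  The
   columns of phi are nonzero and pairwise independent, which is exactly
   d_H(ker phi) >= 3; conversely the columns of any surjective phi_P with such
   a kernel form a spanning projective point family with parent phi_P.  A
   linear isometry L between two such quotient weights sends the weight-one
   vectors, i.e. the nonzero multiples of columns, to weight-one vectors, so
   L phi1 = phi2 M for a monomial map M, which carries ker phi1 onto ker phi2.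
   Conversely a Hamming isometry M with M (ker phi1) = ker phi2 descends to
   L = phi2 M phi1^-1. *)

Section RowHamming.
Variables (F : finFieldType) (nu : nat).
Implicit Types (w : 'rV[F]_nu) (i : 'I_nu).

Lemma hamw_eq0 w : (hamw w == 0%N) = (w == 0).
Proof.
rewrite cards_eq0; apply/eqP/eqP => [w0|->]; last first.
  by apply/setP => i; rewrite !inE mxE eqxx.
apply/rowP => i; rewrite mxE; apply/eqP; apply: contraT => wi.
by rewrite -(in_set0 i) -w0 inE.
Qed.

Lemma hamw_le w : (hamw w <= nu)%N.
Proof. by apply: leq_trans (max_card _) _; rewrite card_ord. Qed.

Lemma hamw_le_card w (S : {set 'I_nu}) :
  (forall k, k \notin S -> w 0 k = 0) -> (hamw w <= #|S|)%N.
Proof.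
move=> wS; apply/subset_leq_card/subsetP => k; rewrite inE.
by apply: contraR => /wS ->.
Qed.

Lemma hamw_delta i : hamw (delta_mx ord0 i : 'rV[F]_nu) = 1%N.
Proof.
rewrite /hamw (_ : [set _ | _] = [set i]) ?cards1 //; apply/setP => k.
by rewrite !inE mxE eqxx; case: (k == i); rewrite ?oner_eq0 ?eqxx.
Qed.

Lemma delta_neq0 i : (delta_mx ord0 i : 'rV[F]_nu) != 0.
Proof. by rewrite -hamw_eq0 hamw_delta. Qed.

Lemma hamw_sum_delta n (s : 'I_n -> 'I_nu) (c : 'I_n -> F) :
  (hamw (\sum_k c k *: delta_mx ord0 (s k) : 'rV[F]_nu) <= n)%N.
Proof.
apply: leq_trans (hamw_le_card (S := [set s k | k in 'I_n]) _) _.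
  move=> j j_out; rewrite summxE big1 // => k _; rewrite !mxE eqxx /=.
  by case: eqP => [jE|]; [case/negP: j_out; rewrite jE imset_f | rewrite mulr0].
by apply: leq_trans (leq_imset_card _ _) _; rewrite card_ord.
Qed.

Lemma lfun_rowE (V : vectType F) (phi : 'Hom('rV[F]_nu, V)) w :
  phi w = \sum_i w 0 i *: phi (delta_mx ord0 i).
Proof.
by rewrite {1}(row_sum_delta w) linear_sum; apply: eq_bigr => i _; rewrite linearZ.
Qed.

Lemma lfun_row_supp (V : vectType F) (phi : 'Hom('rV[F]_nu, V)) w
    (S : {set 'I_nu}) :
  (forall k, k \notin S -> w 0 k = 0) ->
  phi w = \sum_(k in S) w 0 k *: phi (delta_mx ord0 k).
Proof.
move=> wS; rewrite lfun_rowE (bigID (mem S)) /= [X in _ + X]big1 ?addr0 //.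
by move=> k /wS ->; rewrite scale0r.
Qed.

Lemma lfun_row_eq (V : vectType F) (f g : 'Hom('rV[F]_nu, V)) :
  (forall i, f (delta_mx ord0 i) = g (delta_mx ord0 i)) -> f =1 g.
Proof.
by move=> fg w; rewrite lfun_rowE [RHS]lfun_rowE; apply: eq_bigr => i _; rewrite fg.
Qed.

Lemma monomial_hamw_isometry (s : 'I_nu -> 'I_nu) (c : 'I_nu -> F) :
  injective s -> (forall i, c i != 0) ->
  exists M : 'End('rV[F]_nu), (forall w, hamw (M w) = hamw w) /\
    (forall i, M (delta_mx ord0 i) = c i *: delta_mx ord0 (s i)).
Proof.
move=> s_inj c_neq0.
pose D : 'M[F]_nu := \matrix_(i, j) (if s i == j then c i else 0).
exists (linfun (mulmxr D)); split=> [w | i]; last first.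
  rewrite lfunE /= -rowE; apply/rowP => j; rewrite !mxE eq_sym.
  by case: eqP; rewrite ?mulr1 ?mulr0.
have [t st ts] := injF_bij s_inj.
rewrite lfunE /= /hamw -[RHS](card_imset _ s_inj).
rewrite (_ : [set j | _] = s @: [set i | w 0 i != 0]) //; apply/setP => j.
rewrite -[j]ts mem_imset // !inE mxE (bigD1 (t j)) //= big1 ?addr0 => [|k kt].
  by rewrite mxE eqxx mulf_eq0 negb_or c_neq0 andbT.
by rewrite mxE (inj_eq s_inj) (negbTE kt) mulr0.
Qed.

Lemma hamw_isometry_lker0 (M : 'End('rV[F]_nu)) :
  (forall w, hamw (M w) = hamw w) -> lker M = 0%VS.
Proof.
move=> hamwM; apply/eqP/lker0P => a b Mab; apply/eqP.
by rewrite -subr_eq0 -hamw_eq0 -hamwM linearB /= Mab subrr hamw_eq0.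
Qed.

End RowHamming.

Section KernelDistance.
Variables (F : finFieldType) (nu : nat) (V : vectType F) (phi : 'Hom('rV[F]_nu, V)).

Lemma min_dist_ge3_lker_cols : min_dist_ge3 (lker phi) ->
  (forall i, phi (delta_mx ord0 i) != 0) /\
  (forall i j, i != j -> phi (delta_mx ord0 i) \notin <[phi (delta_mx ord0 j)]>%VS).
Proof.
move=> ge3; split=> [i | i j ij].
  apply/eqP => col0; have := ge3 (delta_mx ord0 i).
  by rewrite memv_ker col0 eqxx delta_neq0 hamw_delta => /(_ isT isT).
apply/vlineP => -[a col_ij].
pose w : 'rV[F]_nu := delta_mx ord0 i - a *: delta_mx ord0 j.
have w_ker : w \in lker phi by rewrite memv_ker linearB linearZ /= col_ij subrr.
have wi : w 0 i = 1 by rewrite !mxE eqxx (negbTE ij) mulr0 subr0.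
have w_neq0 : w != 0.
  by apply/eqP => /rowP /(_ i); rewrite wi mxE; apply/eqP/oner_neq0.
have := ge3 w w_ker w_neq0; apply/negP; rewrite -ltnNge ltnS.
apply: leq_trans (hamw_le_card (S := [set i; j]) _) _; last by rewrite cards2 ij.
move=> k; rewrite !inE negb_or => /andP[ki kj].
by rewrite !mxE (negbTE ki) (negbTE kj) mulr0 subr0.
Qed.

Lemma cols_min_dist_ge3_lker :
  (forall i, phi (delta_mx ord0 i) != 0) ->
  (forall i j, i != j -> phi (delta_mx ord0 i) \notin <[phi (delta_mx ord0 j)]>%VS) ->
  min_dist_ge3 (lker phi).
Proof.
move=> col_neq0 col_indep w; rewrite memv_ker => /eqP phiw0 w_neq0.
rewrite leqNgt; apply/negP => hamw_lt3.
have supp_out S : [set k | w 0 k != 0] = S -> forall k, k \notin S -> w 0 k = 0.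
  by move=> <- k; rewrite inE negbK => /eqP.
have : (hamw w == 1%N) || (hamw w == 2%N).
  by move: hamw_lt3 w_neq0; rewrite -hamw_eq0; case: (hamw w) => [|[|[|]]].
case/orP => [/cards1P[i suppw] | /cards2P[i [j [ij suppw]]]].
  have wi : w 0 i != 0 by move: (set11 i); rewrite -suppw inE.
  move: phiw0; rewrite (lfun_row_supp phi (supp_out _ suppw)) big_set1.
  by apply/eqP; rewrite scaler_eq0 negb_or wi col_neq0.
have wi : w 0 i != 0 by move: (set21 i j); rewrite -suppw inE.
move: phiw0; rewrite (lfun_row_supp phi (supp_out _ suppw)).
rewrite big_setU1 ?inE //= big_set1 => sum0.
case/negP: (col_indep i j ij); apply/vlineP; exists (- w 0 j / w 0 i).
apply: (scalerI wi); rewrite scalerA mulrCA divff // mulr1 scaleNr.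
by apply/eqP; rewrite -addr_eq0 sum0.
Qed.

End KernelDistance.

Lemma dim_rV (F : fieldType) n : \dim {:'rV[F]_n} = n.
Proof. by rewrite dimvf /dim /= mul1n. Qed.

Section QuotientWeight.
Variables (F : finFieldType) (nu N : nat) (phi : 'Hom('rV[F]_nu, 'rV[F]_N)).

Lemma quotwt_le w y : phi w = y -> (quotwt phi y <= hamw w)%N.
Proof.
by move=> <-; exact: (@bigmin_le_cond _ nat _ nu w (fun w' => phi w' == phi w)).
Qed.

Lemma quotwt_attained y :
  y \in limg phi -> exists2 w, phi w = y & quotwt phi y = hamw w.
Proof.
case/memv_imgP => w0 _ ->.
have [w /eqP phiw min_w] := @eq_bigmin _ nat _ nu w0
  (fun w => phi w == phi w0) (@hamw F nu) (eqxx _) (fun w _ => hamw_le w).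
by exists w.
Qed.

Lemma quotwt_le1_line y :
  y \in limg phi -> y != 0 -> (quotwt phi y <= 1)%N ->
  exists j, y \in <[phi (delta_mx ord0 j)]>%VS.
Proof.
case/quotwt_attained => w <- -> phiw_neq0 hamw_le1.
have : hamw w == 1%N.
  rewrite eqn_leq hamw_le1 lt0n hamw_eq0.
  by apply: contraNneq phiw_neq0 => ->; rewrite linear0.
case/cards1P => j suppw; exists j.
rewrite (@lfun_row_supp _ _ _ phi w [set j]) ?big_set1 ?memvZ ?memv_line //.
by move=> k; rewrite -suppw inE negbK => /eqP.
Qed.

Lemma dim_lker_onto : limg phi = fullv -> \dim (lker phi) = (nu - N)%N.
Proof.
have := limg_ker_dim phi fullv; rewrite capfv !dim_rV => + phi_onto.
rewrite phi_onto dim_rV => dimE.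
by apply/eqP; rewrite -(eqn_add2r N) dimE subnK // -dimE leq_addl.
Qed.

Lemma onto_dim_lker :
  (N <= nu)%N -> \dim (lker phi) = (nu - N)%N -> limg phi = fullv.
Proof.
have := limg_ker_dim phi fullv; rewrite capfv !dim_rV => rank_nullity hNnu dim_ker.
apply/eqP; rewrite eqEdim subvf dim_rV /=.
by rewrite -(leq_add2l (nu - N)) subnK // -{1}dim_ker rank_nullity.
Qed.

End QuotientWeight.

Lemma eq_lin_isometric (F : finFieldType) N
    (wt1 wt1' wt2 wt2' : 'rV[F]_N -> nat) :
  wt1 =1 wt1' -> wt2 =1 wt2' -> lin_isometric wt1 wt2 <-> lin_isometric wt1' wt2'.
Proof.
move=> E1 E2; split=> -[L [L_ker0 isoL]]; exists L; split=> // x.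
  by rewrite -E1 -E2.
by rewrite E1 E2.
Qed.

Lemma lin_isometric_refl (F : finFieldType) N (wt : 'rV[F]_N -> nat) :
  lin_isometric wt wt.
Proof.
exists \1%VF; split=> [|x]; last by rewrite id_lfunE.
by apply/eqP/lker0P => a b; rewrite !id_lfunE.
Qed.

Section QuotientWeightIsometry.
Variables (F : finFieldType) (nu N : nat) (phi1 phi2 : 'Hom('rV[F]_nu, 'rV[F]_N)).
Hypothesis phi1_onto : limg phi1 = fullv.

Lemma quotwt_transport (L : 'End('rV[F]_N)) (M : 'End('rV[F]_nu)) :
  lker L = 0%VS -> (forall w, hamw (M w) = hamw w) ->
  (forall w, L (phi1 w) = phi2 (M w)) ->
  lin_isometric (quotwt phi1) (quotwt phi2).
Proof.
move=> L_ker0 hamwM LM; exists L; split=> // x.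
have L_inj : injective L by apply/lker0P/eqP.
have M_onto : limg M = fullv by apply: lker0_limgf; rewrite hamw_isometry_lker0.
have /memv_imgP[w _ ->] : x \in limg phi1 by rewrite phi1_onto memvf.
apply/eqP; rewrite eqn_leq LM; apply/andP; split.
  have [u phi2u ->] := quotwt_attained (memv_img phi2 (memvf (M w))).
  have /memv_imgP[v _ uE] : u \in limg M by rewrite M_onto memvf.
  rewrite uE hamwM; apply: quotwt_le; apply: L_inj.
  by rewrite !LM -uE.
have [v phi1v ->] := quotwt_attained (memv_img phi1 (memvf w)).
by rewrite -hamwM; apply: quotwt_le; rewrite -!LM phi1v.
Qed.

Lemma hamming_equiv_quotwt_isometric :
  hamming_equiv (lker phi1) (lker phi2) ->
  lin_isometric (quotwt phi1) (quotwt phi2).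
Proof.
case=> M [hamwM MK].
have M_inj : injective M by apply/lker0P; rewrite hamw_isometry_lker0.
pose L := (phi2 \o M \o phi1^-1)%VF.
have LM w : L (phi1 w) = phi2 (M w).
  rewrite !comp_lfunE; set w' := (phi1^-1)%VF (phi1 w).
  have : w' - w \in lker phi1.
    by rewrite memv_ker linearB /= limg_lfunVK ?subrr // phi1_onto memvf.
  by move/(memv_img M); rewrite MK memv_ker !linearB /= subr_eq0 => /eqP.
apply: (@quotwt_transport L M) => //.
apply/eqP; rewrite -subv0; apply/subvP => y; rewrite memv_ker memv0.
have /memv_imgP[w _ ->] : y \in limg phi1 by rewrite phi1_onto memvf.
rewrite LM -memv_ker -MK => /memv_imgP[v v_ker /M_inj ->].
by rewrite -memv_ker.
Qed.

Hypotheses (phi2_onto : limg phi2 = fullv) (phi1_dist : min_dist_ge3 (lker phi1)).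

Lemma quotwt_isometric_hamming_equiv :
  lin_isometric (quotwt phi1) (quotwt phi2) ->
  hamming_equiv (lker phi1) (lker phi2).
Proof.
case=> L [L_ker0 isoL].
have L_inj : injective L by apply/lker0P/eqP.
have [col_neq0 col_indep] := min_dist_ge3_lker_cols phi1_dist.
(* Weight-one vectors are the nonzero multiples of columns, and L preserves
   weight one. *)
have image_col i : exists p : 'I_nu * F,
    L (phi1 (delta_mx ord0 i)) = p.2 *: phi2 (delta_mx ord0 p.1).
  have Lcol_neq0 : L (phi1 (delta_mx ord0 i)) != 0.
    by rewrite -(linear0 L) (inj_eq L_inj).
  have [||j /vlineP[c ->]] := quotwt_le1_line (phi := phi2) _ Lcol_neq0.
  - by rewrite phi2_onto memvf.
  - rewrite -isoL; have := quotwt_le (erefl (phi1 (delta_mx ord0 i))).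
    by rewrite hamw_delta.
  by exists (j, c).
have [g Lcol] := fin_all_exists image_col.
pose s i := (g i).1; pose c i := (g i).2.
have c_neq0 i : c i != 0.
  apply: contraNneq (col_neq0 i); rewrite /c => ci0.
  by rewrite -(inj_eq L_inj) linear0 Lcol ci0 scale0r.
have s_inj : injective s.
  move=> i i' sii'; apply/eqP; apply: contraT => ii'.
  case/negP: (col_indep i i' ii'); apply/vlineP; exists (c i / c i'); apply: L_inj.
  by rewrite linearZ /= !Lcol -/(s i) -/(c i) -/(s i') -/(c i') sii' scalerA mulfVK.
have [M [hamwM Me]] := monomial_hamw_isometry s_inj c_neq0.
have LM w : L (phi1 w) = phi2 (M w).
  rewrite -!comp_lfunE; apply: lfun_row_eq => i.
  by rewrite !comp_lfunE Me linearZ Lcol.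
exists M; split=> //; apply/eqP; rewrite eqEdim; apply/andP; split.
  apply/subvP => _ /memv_imgP[w w_ker ->]; rewrite memv_ker -LM.
  by move: w_ker; rewrite memv_ker => /eqP ->; rewrite linear0.
by rewrite limg_dim_eq ?hamw_isometry_lker0 ?capv0 // !dim_lker_onto.
Qed.

Lemma quotwt_isometricP :
  lin_isometric (quotwt phi1) (quotwt phi2) <->
  hamming_equiv (lker phi1) (lker phi2).
Proof.
split; first exact: quotwt_isometric_hamming_equiv.
exact: hamming_equiv_quotwt_isometric.
Qed.

End QuotientWeightIsometry.

Section ParentFunction.
Variables (F : finFieldType) (N nu : nat) (Fam : {set 'rV[F]_N}).
Variable phi : 'Hom('rV[F]_nu, 'rV[F]_N).
Hypotheses (card_Fam : #|Fam| = nu) (phi_parent : parent_fun Fam phi).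

Lemma parent_col_line i :
  exists2 v, v \in Fam & phi (delta_mx ord0 i) \in <[v]>%VS.
Proof.
by have [v v_Fam colE] := phi_parent.1 i; exists v; rewrite // -colE memv_line.
Qed.

Lemma parent_mem_line v :
  v \in Fam -> exists j, v \in <[phi (delta_mx ord0 j)]>%VS.
Proof. by case/phi_parent.2 => j colE; exists j; rewrite colE memv_line. Qed.

Lemma projwt_le_quotwt x : (projwt Fam x <= quotwt phi x)%N.
Proof.
apply: (@le_bigmin _ nat) => [|w /eqP phiw].
  by rewrite -card_Fam; exact: (@bigmin_le_id _ nat).
have [f f_Fam col_f] := fin_all_exists2 parent_col_line.
pose I := [set f i | i in [set i | w 0 i != 0]].
apply: (@bigmin_inf _ nat _ _ I) (leq_imset_card _ _).
apply/andP; split; first by apply/subsetP => _ /imsetP[i _ ->].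
rewrite -phiw lfun_rowE; apply: memv_suml => i _.
have [-> | wi] := eqVneq (w 0 i) 0; first by rewrite scale0r mem0v.
have /vlineP[b ->] := col_f i; rewrite scalerA; apply/memvZ/memv_span.
by rewrite mem_enum imset_f // inE.
Qed.

Lemma quotwt_le_projwt x : (quotwt phi x <= projwt Fam x)%N.
Proof.
apply: (@le_bigmin _ nat) => [|I /andP[I_Fam x_I]].
  by rewrite card_Fam; exact: (@bigmin_le_id _ nat).
pose X := enum_tuple I.
have X_line (k : 'I_#|I|) :
    exists p : 'I_nu * F, X`_k = p.2 *: phi (delta_mx ord0 p.1).
  have /parent_mem_line[j /vlineP[b ->]] : X`_k \in Fam.
    by apply: (subsetP I_Fam); rewrite -mem_enum mem_nth ?size_tuple.
  by exists (j, b).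
have [g Xg] := fin_all_exists X_line.
pose w := \sum_k (coord X k x * (g k).2) *: (delta_mx ord0 (g k).1 : 'rV[F]_nu).
have phiw : phi w = x.
  rewrite [RHS](coord_span x_I) linear_sum; apply: eq_bigr => k _.
  by rewrite linearZ Xg scalerA.
exact: leq_trans (quotwt_le phiw) (hamw_sum_delta _ _).
Qed.

Lemma projwt_parent x : projwt Fam x = quotwt phi x.
Proof. by apply/eqP; rewrite eqn_leq projwt_le_quotwt quotwt_le_projwt. Qed.

Lemma parent_onto : spanning Fam -> limg phi = fullv.
Proof.
move=> Fam_span; apply/eqP; rewrite eqEsubv subvf -Fam_span.
apply/span_subvP => v; rewrite mem_enum => /parent_mem_line[j /vlineP[b ->]].
by apply/memvZ/memv_img/memvf.
Qed.

Lemma parent_min_dist : proj_point_family Fam -> min_dist_ge3 (lker phi).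
Proof.
case=> Fam_neq0 Fam_indep.
have [f f_Fam col_f] := fin_all_exists2 phi_parent.1.
have f_onto v : v \in Fam -> exists i, v = f i.
  move=> /[dup] v_Fam /phi_parent.2[i colE]; exists i.
  apply/eqP; apply: contraT => v_neq_fi.
  have := Fam_indep _ _ v_Fam (f_Fam i) v_neq_fi; rewrite free_cons span_seq1.
  by rewrite -col_f colE memv_line.
have f_inj : injective f.
  have : #|[set f i | i in 'I_nu]| == #|'I_nu|.
    rewrite eqn_leq leq_imset_card card_ord /= -[X in (X <= _)%N]card_Fam.
    by apply/subset_leq_card/subsetP => v /f_onto[i ->]; apply: imset_f.
  by move/imset_injP => f_inj i j; apply: f_inj.
apply: cols_min_dist_ge3_lker => [i | i j ij].
  have := dim_vline (phi (delta_mx ord0 i)); rewrite col_f dim_vline Fam_neq0 //.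
  by case: (_ != 0).
rewrite memvE col_f -memvE col_f.
have := Fam_indep _ _ (f_Fam i) (f_Fam j) (contra_neq (@f_inj i j) ij).
by rewrite free_cons span_seq1 => /andP[].
Qed.

End ParentFunction.

Lemma parent_exists (F : finFieldType) N nu (Fam : {set 'rV[F]_N}) :
  #|Fam| = nu -> exists phi : 'Hom('rV[F]_nu, 'rV[F]_N), parent_fun Fam phi.
Proof.
move=> card_Fam; pose X := enum Fam.
have size_X : size X = nu by rewrite -card_Fam cardE.
pose A : 'M[F]_(nu, N) := \matrix_(i < nu) X`_i.
have colA i : linfun (mulmxr A) (delta_mx ord0 i) = X`_i.
  by rewrite lfunE /= -rowE rowK.
exists (linfun (mulmxr A)); split=> [i | v v_Fam].
  by exists X`_i; rewrite ?colA // -mem_enum mem_nth ?size_X.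
have v_idx : (index v X < nu)%N by rewrite -size_X index_mem mem_enum.
by exists (Ordinal v_idx); rewrite colA nth_index ?mem_enum.
Qed.

Section ColumnFamily.
Variables (F : finFieldType) (N nu : nat) (phi : 'Hom('rV[F]_nu, 'rV[F]_N)).

Definition column_family : {set 'rV[F]_N} :=
  [set phi (delta_mx ord0 i) | i : 'I_nu].

Lemma column_family_parent : parent_fun column_family phi.
Proof.
split=> [i | _ /imsetP[i _ ->]]; last by exists i.
by exists (phi (delta_mx ord0 i)); first exact: imset_f.
Qed.

Hypothesis phi_dist : min_dist_ge3 (lker phi).

Lemma card_column_family : #|column_family| = nu.
Proof.
have [_ col_indep] := min_dist_ge3_lker_cols phi_dist.
rewrite card_imset ?card_ord // => i j colij; apply/eqP; apply: contraT => ij.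
by have := col_indep i j ij; rewrite colij memv_line.
Qed.

Lemma column_family_spanning_ppf :
  limg phi = fullv -> spanning_ppf column_family.
Proof.
have [col_neq0 col_indep] := min_dist_ge3_lker_cols phi_dist.
move=> phi_onto; split; last first.
  apply/eqP; rewrite eqEsubv subvf -phi_onto.
  apply/subvP => _ /memv_imgP[w _ ->].
  rewrite lfun_rowE; apply: memv_suml => i _.
  by apply/memvZ/memv_span; rewrite mem_enum; apply: imset_f.
split=> [_ /imsetP[i _ ->] // | _ _ /imsetP[i _ ->] /imsetP[j _ ->] colij].
rewrite free_cons span_seq1 seq1_free col_neq0 andbT col_indep //.
by apply: contra_neq colij => ->.
Qed.

End ColumnFamily.

Theorem proposition4p2 (F : finFieldType) (N nu : nat) (hNnu : (N <= nu)%N) :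
  (* every spanning projective point family of size nu has a parent function *)
  (forall Fam : {set 'rV[F]_N}, spanning_ppf Fam -> #|Fam| = nu ->
     exists phi : 'Hom('rV[F]_nu, 'rV[F]_N), parent_fun Fam phi) /\
  (* parent codes lie in Gr_{nu-N}(F^nu)_{d_H >= 3} *)
  (forall (Fam : {set 'rV[F]_N}) (phi : 'Hom('rV[F]_nu, 'rV[F]_N)),
     spanning_ppf Fam -> #|Fam| = nu -> parent_fun Fam phi ->
     \dim (lker phi) = (nu - N)%N /\ min_dist_ge3 (lker phi)) /\
  (* Psi is well defined (=>) and injective (<=) *)
  (forall (Fam1 Fam2 : {set 'rV[F]_N}) (phi1 phi2 : 'Hom('rV[F]_nu, 'rV[F]_N)),
     spanning_ppf Fam1 -> #|Fam1| = nu -> parent_fun Fam1 phi1 ->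
     spanning_ppf Fam2 -> #|Fam2| = nu -> parent_fun Fam2 phi2 ->
     (lin_isometric (projwt Fam1) (projwt Fam2) <->
      hamming_equiv (lker phi1) (lker phi2))) /\
  (* surjectivity, with inverse [P] |-> [wt_quot, phi_P] for any phi_P with kernel P *)
  (forall (P : {vspace 'rV[F]_nu}) (phiP : 'Hom('rV[F]_nu, 'rV[F]_N)),
     \dim P = (nu - N)%N -> min_dist_ge3 P -> lker phiP = P ->
     exists Fam : {set 'rV[F]_N},
       [/\ spanning_ppf Fam, #|Fam| = nu,
           lin_isometric (quotwt phiP) (projwt Fam) &
           forall phi : 'Hom('rV[F]_nu, 'rV[F]_N), parent_fun Fam phi ->
             hamming_equiv (lker phi) P]).
Proof.
have parent_code Fam (phi : 'Hom('rV[F]_nu, 'rV[F]_N)) :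
    spanning_ppf Fam -> #|Fam| = nu -> parent_fun Fam phi ->
    [/\ limg phi = fullv, min_dist_ge3 (lker phi) & projwt Fam =1 quotwt phi].
  move=> [Fam_ppf Fam_span] card_Fam phi_parent.
  split; first exact: parent_onto phi_parent Fam_span.
    exact: parent_min_dist card_Fam phi_parent Fam_ppf.
  exact: projwt_parent card_Fam phi_parent.
split; first by move=> Fam _; exact: parent_exists.
split.
  move=> Fam phi Fam_sppf card_Fam /(parent_code _ _ Fam_sppf card_Fam)[onto dist _].
  by split; first exact: dim_lker_onto onto.
split.
  move=> Fam1 Fam2 phi1 phi2 s1 c1 /(parent_code _ _ s1 c1)[onto1 dist1 wt1].
  move=> s2 c2 /(parent_code _ _ s2 c2)[onto2 _ wt2].
  exact: iff_trans (eq_lin_isometric wt1 wt2) (quotwt_isometricP onto1 onto2 dist1).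
move=> P phiP dimP distP kerP; rewrite -kerP in dimP distP *.
have phiP_onto := onto_dim_lker hNnu dimP.
have Fam_sppf := column_family_spanning_ppf distP phiP_onto.
have card_Fam := card_column_family distP.
have [_ _ wtP] := parent_code _ _ Fam_sppf card_Fam (column_family_parent phiP).
exists (column_family phiP); split=> // [|phi /(parent_code _ _ Fam_sppf card_Fam)].
  by apply/(eq_lin_isometric (frefl _) wtP)/lin_isometric_refl.
case=> onto dist wt; apply/quotwt_isometricP => //.
by apply/(eq_lin_isometric wt wtP)/lin_isometric_refl.
Qed.
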